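(* Fix $p\in[0,1]$ and let $(G_n)$ be a sequence of graphs with $\min_{u\in V}\delta_u=\omega(\log n)$. For each $n$ and $k$, run the $(k,p,\mathcal B)$-Edge-Majority dynamics on $G_n$ from the configuration in which every node is $\mathcal R$, and let $\mathbf P_k$ denote its law. For every $\gamma>0$ there exists $H=H(p,\gamma)$ such that: (Fast disruption) if $p>1/2$, then for all $k>H$, $\mathbf P_k\big(\mathrm{vol}(B^{(1)})/\mathrm{vol}(V)\ge1-\gamma\big)=1-o(1)$; (Slow disruption) if $p<1/2$, then for all $k>H$ and $K>0$, $\mathbf P_k\big(\forall t\in[0,n^K]:\ \mathrm{vol}(R^{(t)})/\mathrm{vol}(V)\ge1-\gamma\big)=1-o(1)$.
   Context: $G_n=(V,E)$, $V=\{1,\dots,n\}$, $N(u)$ neighbourhood, $\delta_u=|N(u)|$, $\mathrm{vol}(S)=\sum_{v\in S}\delta_v$; $o(1)$ refers to $n\to\infty$ for fixed $k$. States in $\{\mathcal R,\mathcal B\}$; $R^{(t)},B^{(t)}$ are the sets of nodes in each state at round $t$. $(k,p,\mathcal B)$-Edge-Majority: in each round $t\ge1$ every node $u$ independently samples $k$ neighbours uniformly at random with replacement; for each sampled $v$, independently, $u$ sees $v$ as $\mathcal B$ with probability $p$ and otherwise sees $v$'s true state at round $t-1$; $u$ adopts the state seen more often, ties broken uniformly at random. *)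

From HB Require Import structures.
From mathcomp Require Import all_boot all_order all_algebra.
From mathcomp Require Import all_classical all_reals all_analysis.
Set Implicit Arguments. Unset Strict Implicit. Unset Printing Implicit Defensive.
Import Order.TTheory GRing.Theory Num.Theory.
Local Open Scope ring_scope.

Definition simple_graph (n : nat) (G : rel 'I_n) : Prop :=
  (forall u v, G u v = G v u) /\ (forall u, ~~ G u u).

Definition nbhd (n : nat) (G : rel 'I_n) (u : 'I_n) : {set 'I_n} := [set v | G u v].
Definition deg (n : nat) (G : rel 'I_n) (u : 'I_n) : nat := #|nbhd G u|.
Definition vol (n : nat) (G : rel 'I_n) (S : {set 'I_n}) : nat := (\sum_(v in S) deg G v)%N.

(* A configuration is the set of nodes in state B; the others are in state R. *)

Section Dyn.
Variables (R : realType) (n : nat) (G : rel 'I_n) (p : R) (k : nat).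

(* One sample of node u: a neighbour v (uniform in N(u)) and a noise flag c
   (true with probability p, meaning "v is seen as B"; otherwise v's true
   state is seen). *)
Definition sample_weight (u : 'I_n) (s : 'I_n * bool) : R :=
  (if s.1 \in nbhd G u then (deg G u)%:R^-1 else 0) * (if s.2 then p else 1 - p).

Definition seen_blue (X : {set 'I_n}) (s : 'I_n * bool) : bool := s.2 || (s.1 \in X).

(* Probability that u adopts B given the outcome f of its k samples:
   majority of seen states, ties broken uniformly at random. *)
Definition adopt_blue (X : {set 'I_n}) (f : {ffun 'I_k -> 'I_n * bool}) : R :=
  let c := #|[set j | seen_blue X (f j)]| in
  if (c > k - c)%N then 1 else if (c < k - c)%N then 0 else 2^-1.

Definition prob_blue (X : {set 'I_n}) (u : 'I_n) : R :=
  \sum_(f : {ffun 'I_k -> 'I_n * bool})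
     (\prod_(j < k) sample_weight u (f j)) * adopt_blue X f.

Definition trans (X Y : {set 'I_n}) : R :=
  \prod_(u : 'I_n) (if u \in Y then prob_blue X u else 1 - prob_blue X u).

(* Probability, starting from X at round 0, that the configurations at rounds
   0, 1, ..., T all satisfy [good]. *)
Fixpoint prob_always (good : pred {set 'I_n}) (T : nat) (X : {set 'I_n}) : R :=
  match T with
  | 0 => (good X)%:R
  | T'.+1 => (good X)%:R * \sum_(Y : {set 'I_n}) trans X Y * prob_always good T' Y
  end.

Definition prob_round1 (E : pred {set 'I_n}) (X : {set 'I_n}) : R :=
  \sum_(Y : {set 'I_n} | E Y) trans X Y.

End Dyn.

Definition vol_frac (R : realType) (n : nat) (G : rel 'I_n) (S : {set 'I_n}) : R :=
  (vol G S)%:R / (vol G [set: 'I_n])%:R.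

(* If every
   sample shows B with probability at most s < 1/2, Markov's inequality for
   x ^ (2 * #B samples) with x = 1 / (2 s) bounds the probability of adopting
   B by (1/2 + 2 s (1 - s)) ^ k, which is below 2 ^ -(m+1) once k is large.
   Nodes update independently, so by Markov's inequality for
   (2 ^ m) ^ #(B neighbours) a node of degree d ends up with at least a 1/m
   fraction of B neighbours with probability at most (3/4) ^ d, which is
   n ^ -(K+2) when d = omega(log n); a union bound over the nodes gives
   n ^ -(K+1). Configurations in which every node has fewer than a 1/m
   fraction of B neighbours ("thin" ones) have B-volume at most vol(V) / m.
   For p < 1/2, with s = p + 1/m, thinness survives each round except with
   probability n ^ -(K+1), hence survives n ^ K rounds except with probability
   1/n. For p > 1/2 the same argument applied to R in the first round, from
   the all-R configuration, gives fast disruption. *)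

From HB Require Import structures.
From mathcomp Require Import all_boot all_order all_algebra.
From mathcomp Require Import all_classical all_reals all_analysis.
From mathcomp Require Import ring lra zify.
Import Order.TTheory GRing.Theory Num.Theory.
Local Open Scope ring_scope.
Set Implicit Arguments. Unset Strict Implicit.

Lemma exp2N_gt0 (R : realType) m : 0 < 2 ^- m.+1 :> R.
Proof. by rewrite invr_gt0 exprn_gt0. Qed.

Lemma exp2N_le1 (R : realType) m : 2 ^- m.+1 <= 1 :> R.
Proof. by rewrite invf_le1 ?exprn_gt0 // exprn_ege1 // ler1n. Qed.

Lemma ler_sum_exists (R : realType) (J T : finType) (Q : J -> pred T) (F : T -> R) :
  (forall t, 0 <= F t) ->
  \sum_(t | [exists j, Q j t]) F t <= \sum_j \sum_(t | Q j t) F t.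
Proof.
move=> F_ge0; under [X in _ <= X]eq_bigr do rewrite big_mkcond.
rewrite big_mkcond exchange_big /=; apply: ler_sum => t _.
have sum_ge0 (P : pred J) : 0 <= \sum_(j | P j) (if Q j t then F t else 0).
  by apply: sumr_ge0 => j _; case: ifP.
case: ifP => [/existsP[j Qjt] | _]; last exact: sum_ge0.
by rewrite (bigD1 j) //= Qjt lerDl.
Qed.

Lemma ler_sum_subpred (R : realType) (T : finType) (P Q : pred T) (F : T -> R) :
  (forall t, 0 <= F t) -> (forall t, P t -> Q t) ->
  \sum_(t | P t) F t <= \sum_(t | Q t) F t.
Proof.
move=> F_ge0 PQ; rewrite [leRHS](bigID P) /= (eq_bigl P) ?lerDl ?sumr_ge0 //.
by move=> t; apply/andP/idP => [[]//|Pt]; split=> //; exact: PQ.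
Qed.

Section ProductMeasure.
Variables (R : realType) (I : finType).

Lemma sum_set_prod (F G : I -> R) :
  \sum_(Y : {set I}) \prod_i (if i \in Y then F i else G i) = \prod_i (F i + G i).
Proof.
have -> : \prod_i (F i + G i) = \prod_i \sum_(b : bool) (if b then F i else G i).
  by apply: eq_bigr => i _; rewrite big_bool.
rewrite bigA_distr_bigA (reindex (fun Y : {set I} => [ffun i => i \in Y])) /=.
  by apply: eq_bigr => Y _; apply: eq_bigr => i _; rewrite ffunE.
exists (fun f : {ffun I -> bool} => [set i | f i]) => [Y | f] _.
  by apply/setP => i; rewrite inE ffunE.
by apply/ffunP => i; rewrite ffunE inE.
Qed.

Definition prod_bernoulli (a : I -> R) (Y : {set I}) : R :=
  \prod_i (if i \in Y then a i else 1 - a i).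

Lemma prod_bernoulli_ge0 (a : I -> R) :
  (forall i, 0 <= a i <= 1) -> forall Y, 0 <= prod_bernoulli a Y.
Proof.
move=> a01 Y; apply: prodr_ge0 => i _.
by have /andP[] := a01 i; case: ifP => _ //; rewrite subr_ge0.
Qed.

Lemma sum_prod_bernoulli (a : I -> R) : \sum_Y prod_bernoulli a Y = 1.
Proof. by rewrite sum_set_prod; apply: big1 => i _; rewrite addrC subrK. Qed.

Lemma prod_bernoulliC (a : I -> R) Y :
  prod_bernoulli a (~: Y) = prod_bernoulli (fun i => 1 - a i) Y.
Proof. by apply: eq_bigr => i _; rewrite inE if_neg subKr. Qed.

Lemma sum_prod_bernoulli_prod (a g : I -> R) :
  \sum_Y prod_bernoulli a Y * \prod_(i in Y) g i = \prod_i (a i * g i + (1 - a i)).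
Proof.
rewrite -sum_set_prod; apply: eq_bigr => Y _.
rewrite [X in _ * X]big_mkcond -big_split /=; apply: eq_bigr => i _.
by case: ifP; rewrite ?mulr1.
Qed.

Lemma prod_bernoulli_dense (a : I -> R) (N : {set I}) (m : nat) :
  (forall i, 0 <= a i <= 2 ^- m.+1) ->
  \sum_(Y | (#|N| <= m * #|N :&: Y|)%N) prod_bernoulli a Y <= (3 / 4) ^+ #|N|.
Proof.
move=> a_small; set t : R := 2 ^+ m.
have t_gt0 : 0 < t by rewrite exprn_gt0.
have a_t i : a i * t <= 2^-1.
  have /andP[_ a1] := a_small i; apply: le_trans (ler_wpM2r (ltW t_gt0) a1) _.
  by rewrite exprS invfM divfK ?lt0r_neq0.
have a01 i : 0 <= a i <= 1.
  by have /andP[-> /le_trans->] // := a_small i; exact: exp2N_le1.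
have pb_ge0 := prod_bernoulli_ge0 a01.
pose g i := if i \in N then t else 1.
have prod_g (Y : {set I}) : \prod_(i in Y) g i = t ^+ #|N :&: Y|.
  by rewrite -big_mkcondr -prodr_const; apply: eq_bigl => i; rewrite !inE andbC.
have markov (Y : {set I}) : (#|N| <= m * #|N :&: Y|)%N -> 1 <= t ^+ #|N :&: Y| / 2 ^+ #|N|.
  move=> dense; rewrite ler_pdivlMr ?exprn_gt0 // mul1r /t -exprM.
  by apply: ler_weXn2l => //; lra.
have factor i : 0 <= a i * g i + (1 - a i) <= (if i \in N then 3 / 2 else 1).
  have /andP[a0 a1] := a01 i; have at1 := a_t i.
  by rewrite /g; case: ifP => _; apply/andP; split; nra.
apply: (@le_trans _ _ (\sum_Y prod_bernoulli a Y * (t ^+ #|N :&: Y| / 2 ^+ #|N|))).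
  rewrite [leRHS](bigID (fun Y => (#|N| <= m * #|N :&: Y|)%N)) /= -[leLHS]addr0.
  apply: lerD; first apply: ler_sum => Y dense.
    by rewrite -[leLHS]mulr1 ler_wpM2l ?markov.
  by apply: sumr_ge0 => Y _; rewrite mulr_ge0 ?divr_ge0 ?exprn_ge0 // ltW.
under eq_bigr => Y _ do rewrite mulrA -prod_g.
rewrite -mulr_suml sum_prod_bernoulli_prod (_ : 3 / 4 = 3 / 2 / 2 :> R); last by field.
rewrite expr_div_n ler_wpM2r ?invr_ge0 ?exprn_ge0 // -prodr_const [leRHS]big_mkcond.
by apply: ler_prod => i _; exact: factor.
Qed.

End ProductMeasure.

Section IidSamples.
Variables (R : realType) (T : finType) (w : T -> R) (k : nat).
Hypotheses (w_ge0 : forall t, 0 <= w t) (sum_w : \sum_t w t = 1).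

Lemma sum_ffun_prod_exp (P : pred T) (x : R) :
  \sum_(f : {ffun 'I_k -> T}) (\prod_(j < k) w (f j)) * x ^+ #|[set j | P (f j)]| =
  (\sum_t w t * (if P t then x else 1)) ^+ k.
Proof.
rewrite -[in RHS](card_ord k) -prodr_const bigA_distr_bigA; apply: eq_bigr => f _.
rewrite -prodr_const big_split /=; congr (_ * _).
by rewrite big_mkcond; apply: eq_bigr => j _; rewrite inE.
Qed.

Lemma sum_ffun_prod : \sum_(f : {ffun 'I_k -> T}) \prod_(j < k) w (f j) = 1.
Proof.
have := sum_ffun_prod_exp predT 1; under eq_bigr do rewrite expr1n mulr1.
by move=> ->; under eq_bigr do rewrite mulr1; rewrite sum_w expr1n.
Qed.

Definition majority_rate (s : R) : R := 2^-1 + 2 * s * (1 - s).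

(* Markov's inequality for x ^ (2 c), c the number of samples in P and
   x = 1 / (2 s); the rate (1 + (x ^ 2 - 1) s) / x is majority_rate s. *)
Lemma majority_tail (P : pred T) (a : {ffun 'I_k -> T} -> R) (s : R) :
  0 < s < 2^-1 -> \sum_(t | P t) w t <= s ->
  (forall f, a f <= (k <= 2 * #|[set j | P (f j)]|)%N%:R) ->
  \sum_(f : {ffun 'I_k -> T}) (\prod_(j < k) w (f j)) * a f <= majority_rate s ^+ k.
Proof.
move=> /andP[s0 s1] Ps a_maj; set x := (2 * s)^-1.
have x_gt1 : 1 < x by rewrite /x invf_gt1; lra.
have xk_gt0 : 0 < x ^+ k by rewrite exprn_gt0 //; lra.
set q := \sum_(t | P t) w t.
have q0 : 0 <= q by exact: sumr_ge0.
have a_le f : a f <= (x ^+ 2) ^+ #|[set j | P (f j)]| / x ^+ k.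
  apply: le_trans (a_maj f) _; case: leqP => maj.
    by rewrite ler_pdivlMr // mul1r -exprM ler_weXn2l //; exact: ltW.
  by rewrite divr_ge0 ?exprn_ge0 ?ltW //; lra.
apply: le_trans (_ : \sum_(f : {ffun 'I_k -> T})
    (\prod_(j < k) w (f j)) * ((x ^+ 2) ^+ #|[set j | P (f j)]| / x ^+ k) <= _).
  by apply: ler_sum => f _; rewrite ler_wpM2l ?prodr_ge0.
under eq_bigr => f _ do rewrite mulrA.
rewrite -mulr_suml sum_ffun_prod_exp -expr_div_n.
have -> : \sum_t w t * (if P t then x ^+ 2 else 1) = 1 + (x ^+ 2 - 1) * q.
  rewrite /q -[X in _ = X + _]sum_w mulr_sumr [X in _ + X]big_mkcond -big_split /=.
  by apply: eq_bigr => t _; case: ifP => _; ring.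
apply: lerXn2r; rewrite ?nnegrE.
- by rewrite divr_ge0 ?addr_ge0 ?mulr_ge0 ?subr_ge0 ?exprn_ege1 //; lra.
- by rewrite /majority_rate; nra.
have -> : majority_rate s = (1 + (x ^+ 2 - 1) * s) / x.
  by rewrite /majority_rate /x; field; lra.
by rewrite ler_pM2r ?invr_gt0 ?lerD2l ?ler_wpM2l ?subr_ge0 ?exprn_ege1 //; lra.
Qed.

End IidSamples.

Definition thin n (G : rel 'I_n) (m : nat) (S : {set 'I_n}) : bool :=
  [forall u, m * #|nbhd G u :&: S| < deg G u]%N.

Lemma thin_set0 n (G : rel 'I_n) m : (forall u, 0 < deg G u)%N -> thin G m finset.set0.
Proof. by move=> deg_gt0; apply/forallP => u; rewrite finset.setI0 cards0 muln0. Qed.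

Lemma prod_bernoulli_not_thin (R : realType) n (G : rel 'I_n) (m : nat) (a : 'I_n -> R) :
  (forall v, 0 <= a v <= 2 ^- m.+1) ->
  \sum_(Y | ~~ thin G m Y) prod_bernoulli a Y <= \sum_u (3 / 4) ^+ deg G u.
Proof.
move=> a_small; have a01 v : 0 <= a v <= 1.
  by have /andP[-> /le_trans->] // := a_small v; exact: exp2N_le1.
rewrite (eq_bigl (fun Y => [exists u, deg G u <= m * #|nbhd G u :&: Y|]%N)); last first.
  by move=> Y; rewrite negb_forall; apply: eq_existsb => u; rewrite -leqNgt.
apply: le_trans (ler_sum_exists _ (prod_bernoulli_ge0 a01)) _.
by apply: ler_sum => u _; exact: prod_bernoulli_dense.
Qed.

Definition nbhd_frac (R : realType) n (G : rel 'I_n) (X : {set 'I_n}) (u : 'I_n) : R :=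
  #|nbhd G u :&: X|%:R / (deg G u)%:R.

Section EdgeMajority.
Variables (R : realType) (n : nat) (G : rel 'I_n) (p : R) (k : nat).
Hypotheses (p_ge0 : 0 <= p) (p_le1 : p <= 1) (deg_gt0 : forall u, (0 < deg G u)%N).
Implicit Types (u : 'I_n) (X : {set 'I_n}) (f : {ffun 'I_k -> 'I_n * bool}).

Let deg_neq0 u : (deg G u)%:R != 0 :> R.
Proof. by rewrite pnatr_eq0 -lt0n. Qed.

Lemma sample_weight_ge0 u s : 0 <= sample_weight G p u s.
Proof.
rewrite /sample_weight mulr_ge0 //; first by case: ifP.
by case: ifP; rewrite ?subr_ge0.
Qed.

Lemma sum_sample_weight_seen_blue u X :
  \sum_(s | seen_blue X s) sample_weight G p u s = p + (1 - p) * nbhd_frac R G X u.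
Proof.
rewrite big_mkcond /=.
rewrite -(pair_bigA _ (fun v b => if seen_blue X (v, b) then sample_weight G p u (v, b) else 0)).
under eq_bigr => v _ do rewrite big_bool /seen_blue /sample_weight /=.
have sum_if (A : {set 'I_n}) (c : R) : \sum_v (if v \in A then c else 0) = #|A|%:R * c.
  by rewrite -big_mkcond sumr_const mulr_natl.
have split_v v : (if v \in nbhd G u then (deg G u)%:R^-1 else 0) * p +
    (if v \in X then (if v \in nbhd G u then (deg G u)%:R^-1 else 0) * (1 - p) else 0) =
    (if v \in nbhd G u then p / (deg G u)%:R else 0) +
    (if v \in nbhd G u :&: X then (1 - p) / (deg G u)%:R else 0).
  by rewrite finset.in_setI; case: (v \in nbhd G u); case: (v \in X) => /=; ring.
rewrite (eq_bigr _ (fun v _ => split_v v)) big_split /= !sum_if /nbhd_frac.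
by have := deg_neq0 u; rewrite /deg => ?; field.
Qed.

Lemma sum_sample_weight u : \sum_s sample_weight G p u s = 1.
Proof.
have := sum_sample_weight_seen_blue u [set: 'I_n].
rewrite /nbhd_frac finset.setIT divff ?deg_neq0 // mulr1 addrC subrK => <-.
by apply: eq_bigl => s; rewrite /seen_blue finset.in_setT orbT.
Qed.

Lemma sum_sample_weight_seen_red u X :
  \sum_(s | ~~ seen_blue X s) sample_weight G p u s = (1 - p) * (1 - nbhd_frac R G X u).
Proof.
have := sum_sample_weight u; rewrite (bigID (seen_blue X)) /= sum_sample_weight_seen_blue.
by move=> /(canRL (addKr _)) ->; ring.
Qed.

Lemma card_seen_red X f :
  #|[set j | ~~ seen_blue X (f j)]| = (k - #|[set j | seen_blue X (f j)]|)%N.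
Proof.
rewrite (_ : [set j | _] = ~: [set j | seen_blue X (f j)]); last by apply/setP => j; rewrite !inE.
by rewrite cardsCs finset.setCK card_ord.
Qed.

Lemma adopt_blue_ge0_le1 X f : 0 <= adopt_blue R X f <= 1.
Proof. by rewrite /adopt_blue; case: ltnP => _; [|case: ltnP => _]; lra. Qed.

Lemma adopt_blue_le_majority X f :
  adopt_blue R X f <= (k <= 2 * #|[set j | seen_blue X (f j)]|)%N%:R.
Proof.
rewrite /adopt_blue; set c := #|_|.
have : (c <= k)%N by rewrite -[X in (_ <= X)%N](card_ord k) max_card.
by case: ltngtP => h ck; case: leqP => /= ?; first [lia | lra].
Qed.

Lemma adopt_red_le_majority X f :
  1 - adopt_blue R X f <= (k <= 2 * #|[set j | ~~ seen_blue X (f j)]|)%N%:R.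
Proof.
rewrite card_seen_red /adopt_blue; set c := #|_|.
have : (c <= k)%N by rewrite -[X in (_ <= X)%N](card_ord k) max_card.
by case: ltngtP => h ck; case: leqP => /= ?; first [lia | lra].
Qed.

Lemma prob_blue_ge0 X u : 0 <= prob_blue G p k X u.
Proof.
apply: sumr_ge0 => f _; rewrite mulr_ge0 ?(andP (adopt_blue_ge0_le1 X f)).1 //.
by apply: prodr_ge0 => j _; exact: sample_weight_ge0.
Qed.

Lemma prob_blue_le1 X u : prob_blue G p k X u <= 1.
Proof.
rewrite -(sum_ffun_prod k (sum_sample_weight u)); apply: ler_sum => f _.
rewrite ler_piMr ?(andP (adopt_blue_ge0_le1 X f)).2 //.
by apply: prodr_ge0 => j _; exact: sample_weight_ge0.
Qed.

Lemma prob_blue_le_rate X u s :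
  0 < s < 2^-1 -> p + (1 - p) * nbhd_frac R G X u <= s ->
  prob_blue G p k X u <= majority_rate s ^+ k.
Proof.
move=> s_range blue_le; rewrite /prob_blue.
apply: (majority_tail (sample_weight_ge0 u) (sum_sample_weight u) (P := seen_blue X) s_range).
  by rewrite sum_sample_weight_seen_blue.
exact: adopt_blue_le_majority.
Qed.

Lemma prob_red_le_rate X u s :
  0 < s < 2^-1 -> (1 - p) * (1 - nbhd_frac R G X u) <= s ->
  1 - prob_blue G p k X u <= majority_rate s ^+ k.
Proof.
move=> s_range red_le.
rewrite -{1}(sum_ffun_prod k (sum_sample_weight u)) /prob_blue -sumrB.
under eq_bigr => f _ do rewrite -{1}[\prod_(j < k) _]mulr1 -mulrBr.
apply: (majority_tail (sample_weight_ge0 u) (sum_sample_weight u)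
  (P := predC (seen_blue X)) s_range).
  by rewrite sum_sample_weight_seen_red.
exact: adopt_red_le_majority.
Qed.

Lemma trans_ge0 X Y : 0 <= trans G p k X Y.
Proof. by apply: prod_bernoulli_ge0 => u; rewrite prob_blue_ge0 prob_blue_le1. Qed.

Lemma sum_trans X : \sum_Y trans G p k X Y = 1.
Proof. exact: sum_prod_bernoulli. Qed.

Lemma trans_not_thin X m :
  (forall v, prob_blue G p k X v <= 2 ^- m.+1) ->
  \sum_(Y | ~~ thin G m Y) trans G p k X Y <= \sum_u (3 / 4) ^+ deg G u.
Proof. by move=> small; apply: prod_bernoulli_not_thin => v; rewrite prob_blue_ge0 small. Qed.

Lemma trans_not_thinC X m :
  (forall v, 1 - prob_blue G p k X v <= 2 ^- m.+1) ->
  \sum_(Y | ~~ thin G m (~: Y)) trans G p k X Y <= \sum_u (3 / 4) ^+ deg G u.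
Proof.
move=> small; rewrite (reindex_inj (@finset.setC_inj _)) /=.
under eq_bigl do rewrite finset.setCK.
under eq_bigr do rewrite [trans _ _ _ _ _]prod_bernoulliC.
by apply: prod_bernoulli_not_thin => v; rewrite subr_ge0 prob_blue_le1 small.
Qed.

Lemma prob_always_ge0 good T X : 0 <= prob_always G p k good T X.
Proof.
elim: T X => [|T IH] X /=; first exact: ler0n.
by rewrite mulr_ge0 ?ler0n ?sumr_ge0 // => Y _; rewrite mulr_ge0 ?trans_ge0.
Qed.

Lemma prob_always_invariant (good inv : pred {set 'I_n}) (dl : R) :
  (forall X, inv X -> good X) ->
  (forall X, inv X -> \sum_(Y | ~~ inv Y) trans G p k X Y <= dl) ->
  forall T X, inv X -> 1 - T%:R * dl <= prob_always G p k good T X.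
Proof.
move=> inv_good inv_stays; elim=> [|T IH] X invX /=.
  by rewrite inv_good // mul0r subr0.
rewrite inv_good // mul1r.
have sum_inv_le1 : \sum_(Y | inv Y) trans G p k X Y <= 1.
  rewrite -(sum_trans X) [leRHS](bigID inv) /= lerDl.
  by apply: sumr_ge0 => Y _; exact: trans_ge0.
have dl_ge0 : 0 <= dl.
  by apply: le_trans (inv_stays X invX); apply: sumr_ge0 => Y _; exact: trans_ge0.
(* The failure probability 1 - prob_always grows by at most dl per round. *)
have -> : \sum_Y trans G p k X Y * prob_always G p k good T Y =
    1 - \sum_Y trans G p k X Y * (1 - prob_always G p k good T Y).
  by rewrite -[X in X - _](sum_trans X) -sumrB; apply: eq_bigr => Y _; ring.
rewrite lerD2l lerN2 -natr1 mulrDl mul1r (bigID inv) /=; apply: lerD.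
  apply: le_trans (_ : \sum_(Y | inv Y) trans G p k X Y * (T%:R * dl) <= _).
    by apply: ler_sum => Y invY; rewrite ler_wpM2l ?trans_ge0 // lerBlDl -lerBlDr IH.
  by rewrite -mulr_suml ler_piMl ?mulr_ge0.
apply: le_trans (inv_stays X invX); apply: ler_sum => Y _.
by rewrite ler_piMr ?trans_ge0 // lerBlDr lerDl prob_always_ge0.
Qed.

Lemma trans_exit_thin X m s :
  (0 < m)%N -> 0 < s < 2^-1 -> p + m%:R^-1 <= s -> majority_rate s ^+ k <= 2 ^- m.+1 ->
  thin G m X -> \sum_(Y | ~~ thin G m Y) trans G p k X Y <= \sum_u (3 / 4) ^+ deg G u.
Proof.
move=> m_gt0 s_range ps rate_small /forallP X_thin; apply: trans_not_thin => v.
apply: le_trans rate_small; apply: prob_blue_le_rate => //; apply: le_trans ps.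
rewrite lerD2l; apply: le_trans (_ : nbhd_frac R G X v <= _).
  by rewrite ler_piMl ?divr_ge0 // gerBl.
rewrite /nbhd_frac ler_pdivrMr ?ltr0n // mulrC ler_pdivlMr ?ltr0n //.
by rewrite -natrM ler_nat mulnC ltnW.
Qed.

Lemma trans_exit_thinC_set0 m s :
  0 < s < 2^-1 -> 1 - p <= s -> majority_rate s ^+ k <= 2 ^- m.+1 ->
  \sum_(Y | ~~ thin G m (~: Y)) trans G p k finset.set0 Y <= \sum_u (3 / 4) ^+ deg G u.
Proof.
move=> s_range ps rate_small; apply: trans_not_thinC => v.
apply: le_trans rate_small; apply: prob_red_le_rate => //.
by rewrite /nbhd_frac finset.setI0 cards0 mul0r subr0 mulr1.
Qed.

End EdgeMajority.

Section Volume.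
Variables (n : nat) (G : rel 'I_n).
Hypothesis G_sym : forall u v, G u v = G v u.

Lemma vol_setC S : (vol G S + vol G (~: S))%N = vol G [set: 'I_n].
Proof. by rewrite /vol [RHS](big_setID S) finset.setTI finset.setTD. Qed.

Lemma vol_nbhd_setI S : vol G S = (\sum_u #|nbhd G u :&: S|)%N.
Proof.
rewrite /vol /deg; under eq_bigr => v _ do rewrite -sum1_card.
rewrite (exchange_big_dep predT) //=; apply: eq_bigr => u _.
by rewrite -sum1_card; apply: eq_bigl => v; rewrite !inE G_sym andbC.
Qed.

Lemma vol_frac_setC_thin (R : realType) m S :
  (0 < n)%N -> (0 < m)%N -> thin G m S -> 1 - m%:R^-1 <= vol_frac R G (~: S).
Proof.
move=> n_gt0 m_gt0 /forallP S_thin.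
have volS : (m * vol G S <= vol G [set: 'I_n])%N.
  rewrite vol_nbhd_setI big_distrr vol_nbhd_setI /=.
  by apply: leq_sum => u _; rewrite finset.setIT ltnW.
have vol_gt0 : (0 < vol G [set: 'I_n])%N.
  rewrite (vol_nbhd_setI [set: _]) (bigD1 (Ordinal n_gt0)) //= finset.setIT.
  by rewrite (leq_trans _ (leq_addr _ _)) // (leq_ltn_trans _ (S_thin _)).
move: volS vol_gt0; rewrite /vol_frac -(vol_setC S) natrD.
set a := vol G S; set b := vol G (~: S) => volS ab_gt0.
have ab_pos : 0 < a%:R + b%:R :> R by rewrite -natrD ltr0n.
have a_le : a%:R <= m%:R^-1 * (a%:R + b%:R) :> R.
  by rewrite mulrC ler_pdivlMr ?ltr0n // mulrC -natrD -natrM ler_nat.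
by rewrite ler_pdivlMr // mulrBl mul1r; lra.
Qed.

End Volume.

Section Asymptotics.
Variable R : realType.

Lemma eventually_exprn_le (rho r : R) :
  0 <= rho < 1 -> 0 < r -> exists H : nat, forall k, (H < k)%N -> rho ^+ k <= r.
Proof.
move=> /andP[rho_ge0 rho_lt1] r_gt0.
have : `|rho| < 1 by rewrite ger0_norm.
move=> /cvg_expr /cvgr0_norm_le /(_ r r_gt0) [H _ rho_small].
by exists H => k Hk; apply: le_trans (rho_small k (ltnW Hk)); exact: ler_norm.
Qed.

Lemma eventually_majority_rate_le (s r : R) :
  0 < s < 2^-1 -> 0 < r -> exists H : nat, forall k, (H < k)%N -> majority_rate s ^+ k <= r.
Proof.
move=> /andP[s_gt0 s_lt] r_gt0; apply: eventually_exprn_le r_gt0.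
by rewrite /majority_rate; apply/andP; split; nra.
Qed.

Lemma eventually_invn_le (eps : R) :
  0 < eps -> exists N : nat, forall n, (N <= n)%N -> n%:R^-1 <= eps.
Proof.
move=> eps_gt0; exists (Num.Def.archi_bound eps^-1) => n Nn.
have n_gt : eps^-1 < n%:R.
  apply: lt_le_trans (archi_boundP _) _; first by rewrite invr_ge0 ltW.
  by rewrite ler_nat.
have n_pos : 0 < n%:R :> R by apply: le_lt_trans n_gt; rewrite invr_ge0 ltW.
by rewrite -[leRHS]invrK lef_pV2 ?posrE ?invr_gt0 // ltW.
Qed.

Lemma exists_invn_le (c : R) : 0 < c -> exists2 m : nat, (0 < m)%N & m%:R^-1 <= c.
Proof. by move=> /eventually_invn_le[N small]; exists N.+1 => //; exact: small. Qed.

Let ln34_lt0 : ln (3 / 4 : R) < 0.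
Proof. by rewrite ln_lt0 //; apply/andP; split; lra. Qed.

Lemma exp34_le_powRN (d n : nat) (c : R) :
  (0 < n)%N -> c / - ln (3 / 4) * ln n%:R <= d%:R -> (3 / 4) ^+ d <= n%:R `^ (- c).
Proof.
move=> n_gt0 d_large; have L_gt0 : 0 < - ln (3 / 4 : R) by rewrite oppr_gt0.
rewrite -ler_ln ?posrE ?powR_gt0 ?exprn_gt0 ?ltr0n // lnXn ?ln_powR; last lra.
move: d_large; rewrite mulrAC ler_pdivrMr // -mulr_natr.
by nra.
Qed.

Definition mindeg_omega_log (G : forall n : nat, rel 'I_n) : Prop :=
  forall C : R, 0 < C -> exists N : nat, forall n : nat, (N <= n)%N ->
    forall u : 'I_n, C * ln (n%:R) <= (deg (G n) u)%:R.

Lemma mindeg_omega_log_eventually (G : forall n : nat, rel 'I_n) (K eps : R) :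
  mindeg_omega_log G -> 0 <= K -> 0 < eps ->
  exists N : nat, forall n, (N <= n)%N ->
    [/\ (0 < n)%N, forall u : 'I_n, (0 < deg (G n) u)%N &
        n%:R `^ K * \sum_u (3 / 4) ^+ deg (G n) u <= eps].
Proof.
move=> Gdeg K_ge0 eps_gt0.
have C_gt0 : 0 < (K + 2) / - ln (3 / 4 : R) by rewrite divr_gt0 ?oppr_gt0 //; lra.
have [N0 deg_large] := Gdeg _ C_gt0.
have [N1 invn_small] := eventually_invn_le eps_gt0.
exists (maxn N0 (maxn N1 2)) => n; rewrite !geq_max => /and3P[nN0 nN1 n_ge2].
have n_gt0 : (0 < n)%N by apply: leq_trans n_ge2.
have ln_gt0 : 0 < ln (n%:R : R) by rewrite ln_gt0 // ltr1n.
split=> // [u|].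
  by rewrite -(ltr0n R); apply: lt_le_trans (deg_large n nN0 u); rewrite mulr_gt0.
apply: le_trans (invn_small n nN1).
have n_neq0 : (n%:R : R) != 0 by rewrite pnatr_eq0 -lt0n.
have -> : (n%:R : R)^-1 = n%:R `^ K * (n%:R * n%:R `^ (- (K + 2))).
  have nK_neq0 : (n%:R : R) `^ K != 0 by rewrite powR_eq0 negb_and n_neq0.
  rewrite powRN powRD ?n_neq0 ?implybT // powR_mulrn // expr2.
  by field; rewrite nK_neq0 n_neq0.
rewrite ler_wpM2l ?powR_ge0 //.
apply: le_trans (_ : \sum_(u < n) n%:R `^ (- (K + 2)) <= _).
  by apply: ler_sum => u _; apply: exp34_le_powRN => //; exact: deg_large.
by rewrite sumr_const card_ord mulr_natl.
Qed.

End Asymptotics.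

Lemma slow_disruption (R : realType) (p gamma : R) :
  0 <= p -> p < 2^-1 -> 0 < gamma ->
  exists H : nat, forall G : forall n : nat, rel 'I_n,
    (forall n, simple_graph (G n)) -> mindeg_omega_log R G ->
    forall k : nat, (H < k)%N -> forall K : R, 0 < K -> forall eps : R, 0 < eps ->
    exists N : nat, forall n : nat, (N <= n)%N ->
      1 - eps <= prob_always (G n) p k (fun X => 1 - gamma <= vol_frac R (G n) (~: X))
                   (Num.truncn (n%:R `^ K)) finset.set0.
Proof.
move=> p_ge0 p_lt gamma_gt0.
have [m m_gt0] : exists2 m : nat, (0 < m)%N & m%:R^-1 <= Num.min gamma ((2^-1 - p) / 2).
  by apply: exists_invn_le; rewrite lt_min gamma_gt0 /=; lra.
rewrite le_min => /andP[m_gamma m_p].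
have m_pos : 0 < m%:R^-1 :> R by rewrite invr_gt0 ltr0n.
have s_range : 0 < p + m%:R^-1 < 2^-1 by apply/andP; split; lra.
have [H rate_small] := eventually_majority_rate_le s_range (exp2N_gt0 R m).
exists H => G G_simple G_deg k Hk K K_gt0 eps eps_gt0.
have [N large] := mindeg_omega_log_eventually G_deg (ltW K_gt0) eps_gt0.
exists N => n /large[n_gt0 deg_gt0 fail_small].
have p_le1 : p <= 1 by lra.
have [G_sym _] := G_simple n.
have thin_good X : thin (G n) m X -> 1 - gamma <= vol_frac R (G n) (~: X).
  move=> X_thin; apply: le_trans (vol_frac_setC_thin G_sym R n_gt0 m_gt0 X_thin).
  by rewrite lerD2l lerN2.
have thin_stays X : thin (G n) m X ->
    \sum_(Y | ~~ thin (G n) m Y) trans (G n) p k X Y <= \sum_u (3 / 4) ^+ deg (G n) u.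
  exact: (trans_exit_thin p_ge0 p_le1 deg_gt0 m_gt0 s_range (lexx _) (rate_small k Hk)).
apply: le_trans
  (prob_always_invariant p_ge0 p_le1 deg_gt0 thin_good thin_stays _ (thin_set0 m deg_gt0)).
rewrite lerD2l lerN2; apply: le_trans fail_small; apply: ler_wpM2r.
  by apply: sumr_ge0 => u _; rewrite exprn_ge0.
by rewrite truncn_le powR_ge0.
Qed.

Lemma fast_disruption (R : realType) (p gamma : R) :
  2^-1 < p -> p <= 1 -> 0 < gamma ->
  exists H : nat, forall G : forall n : nat, rel 'I_n,
    (forall n, simple_graph (G n)) -> mindeg_omega_log R G ->
    forall k : nat, (H < k)%N -> forall eps : R, 0 < eps ->
    exists N : nat, forall n : nat, (N <= n)%N ->
      1 - eps <= prob_round1 (G n) p k (fun Y => 1 - gamma <= vol_frac R (G n) Y) finset.set0.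
Proof.
move=> p_gt p_le1 gamma_gt0; have p_ge0 : 0 <= p by lra.
have [m m_gt0 m_gamma] := exists_invn_le gamma_gt0.
have s_range : 0 < (3 / 2 - p) / 2 < 2^-1 by apply/andP; split; lra.
have [H rate_small] := eventually_majority_rate_le s_range (exp2N_gt0 R m).
exists H => G G_simple G_deg k Hk eps eps_gt0.
have [N large] := mindeg_omega_log_eventually G_deg (lexx 0) eps_gt0.
exists N => n /large[n_gt0 deg_gt0]; rewrite powRr0 mul1r => fail_small.
have [G_sym _] := G_simple n.
have red_le : 1 - p <= (3 / 2 - p) / 2 by lra.
have := trans_exit_thinC_set0 p_ge0 p_le1 deg_gt0 s_range red_le (rate_small k Hk).
have := sum_trans (G n) p k finset.set0.
rewrite (bigID (fun Y => thin (G n) m (~: Y))) /= => sum1 exit_small.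
apply: le_trans (_ : \sum_(Y | thin (G n) m (~: Y)) trans (G n) p k finset.set0 Y <= _).
  lra.
apply: ler_sum_subpred => [Y|Y Y_thin]; first exact: trans_ge0.
have := vol_frac_setC_thin G_sym R n_gt0 m_gt0 Y_thin; rewrite finset.setCK.
by apply: le_trans; rewrite lerD2l lerN2.
Qed.

Theorem proposition6p4 (R : realType) (p : R) (hp0 : 0 <= p) (hp1 : p <= 1)
  (gamma : R) (hgamma : 0 < gamma) :
  exists H : nat,
  forall G : forall n : nat, rel 'I_n,
    (forall n, simple_graph (G n)) ->
    (* min degree = omega(log n) *)
    (forall C : R, 0 < C -> exists N : nat, forall n : nat, (N <= n)%N ->
        forall u : 'I_n, C * ln (n%:R) <= (deg (G n) u)%:R) ->
    ((* Fast disruption *)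
     p > 2^-1 ->
     forall k : nat, (H < k)%N ->
       forall eps : R, 0 < eps -> exists N : nat, forall n : nat, (N <= n)%N ->
         1 - eps <= prob_round1 (G n) p k
                      (fun Y => 1 - gamma <= vol_frac R (G n) Y) (finset.set0 : {set 'I_n}))
    /\
    ((* Slow disruption *)
     p < 2^-1 ->
     forall k : nat, (H < k)%N -> forall K : R, 0 < K ->
       forall eps : R, 0 < eps -> exists N : nat, forall n : nat, (N <= n)%N ->
         1 - eps <= prob_always (G n) p k
                      (fun X => 1 - gamma <= vol_frac R (G n) (~: X))
                      (Num.truncn (powR (n%:R) K)) (finset.set0 : {set 'I_n})).
Proof.
case: (ltrgtP p 2^-1) => [p_lt | p_gt | p_eq].
- have [H slow] := slow_disruption hp0 p_lt hgamma.
  by exists H => G G_simple G_deg; split => [p_gt|_]; [lra | exact: slow].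
- have [H fast] := fast_disruption p_gt hp1 hgamma.
  by exists H => G G_simple G_deg; split => [_|p_lt]; [exact: fast | lra].
- by exists 0%N => G _ _; split => p_ne; lra.
Qed.
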